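(* Let $G$ be a finite group with identity $e$, and let $\mathcal{B}\subseteq\binom{G}{3}$ be the set of bases of a rank-$3$ matroid on the ground set $G$ that is invariant under left multiplication by $G$. Let $g,h,g',h'\in G$ with $e,g,h$ pairwise distinct and $e,g',h'$ pairwise distinct. If $f_{g,h}\cup f_{g',h'}\subseteq\mathcal{B}$, then $f_{g,g'}\subseteq\mathcal{B}$ or $f_{g,h'}\subseteq\mathcal{B}$, where only those of $f_{g,g'}$, $f_{g,h'}$ that are defined (i.e. $g'\ne g$, resp. $h'\neq g$) are considered; at least one of them is defined and contained in $\mathcal{B}$.
   Context: $G$ acts on $\binom{G}{3}$ by $x\cdot\{a,b,c\}=\{xa,xb,xc\}$. For $g,h\in G$ with $e,g,h$ pairwise distinct, $f_{g,h}=\{\{a,ag,ah\}\mid a\in G\}$ (a $G$-orbit, with $f_{g,h}=f_{h,g}$). A matroid on ground set $G$ is invariant if its set of bases is preserved by this action. *)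

From mathcomp Require Import all_boot all_fingroup.
Set Implicit Arguments. Unset Strict Implicit. Unset Printing Implicit Defensive.
Local Open Scope group_scope.

Definition is_matroid_bases (T : finType) (B : {set {set T}}) : Prop :=
  B != set0 /\
  forall B1 B2, B1 \in B -> B2 \in B -> forall x, x \in B1 :\: B2 ->
    exists2 y, y \in B2 :\: B1 & (B1 :\ x) :|: [set y] \in B.

Definition is_rank3_matroid_bases (T : finType) (B : {set {set T}}) : Prop :=
  is_matroid_bases B /\ forall b, b \in B -> #|b| = 3.

Definition left_invariant (gT : finGroupType) (B : {set {set gT}}) : Prop :=
  forall (x : gT) (b : {set gT}), b \in B -> [set x * y | y in b] \in B.

Definition forb (gT : finGroupType) (g h : gT) : {set {set gT}} :=
  [set [set a; a * g; a * h] | a : gT].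

(* By left invariance, f_{g,h} lies in B exactly when the single triangle
   {1, g, h} is a basis.  If h is one of g', h' we are done at once.
   Otherwise exchange h out of {1, g, h} against {1, g', h'}: the new element
   is neither 1 nor g, so it is g' or h', and {1, g, y} is a basis. *)
From mathcomp Require Import all_boot all_fingroup.
Local Open Scope group_scope.

Lemma imset_mulg_set3 (gT : finGroupType) (x a b c : gT) :
  [set x * y | y in [set a; b; c]] = [set x * a; x * b; x * c].
Proof. by rewrite !imsetU !imset_set1. Qed.

Lemma forb_set1 {gT : finGroupType} (g h : gT) : [set 1; g; h] \in forb g h.
Proof. by apply/imsetP; exists 1; rewrite ?mul1g. Qed.

Lemma forb_subsetP {gT : finGroupType} {B : {set {set gT}}} {g h : gT} :
  left_invariant B -> reflect ([set 1; g; h] \in B) (forb g h \subset B).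
Proof.
move=> invB; apply: (iffP idP) => [/subsetP -> // | Bgh]; first exact: forb_set1.
apply/subsetP => _ /imsetP [a _ ->].
by have := invB a _ Bgh; rewrite imset_mulg_set3 mulg1.
Qed.

Lemma set3D1_set1 (T : finType) (a b c y : T) :
  c != a -> c != b -> y != c -> [set a; b; c] :\ c :|: [set y] = [set a; b; y].
Proof.
move=> ca cb yc; apply/setP => z; rewrite !inE.
by have [->|] := eqVneq z c; rewrite ?(negbTE ca) ?(negbTE cb) 1?eq_sym ?(negbTE yc) ?orbF.
Qed.

Lemma basis_exchange_triangle {gT : finGroupType} {B : {set {set gT}}}
    {g h g' h' : gT} :
  is_matroid_bases B -> [set 1; g; h] \in B -> [set 1; g'; h'] \in B ->
  h != 1 -> h != g -> h != g' -> h != h' ->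
  exists2 y, (y == g') || (y == h') & (y != g) && ([set 1; g; y] \in B).
Proof.
move=> [_ exB] B1 B2 h1 hg hg' hh'.
have hD : h \in [set 1; g; h] :\: [set 1; g'; h'].
  by rewrite !inE eqxx !orbT (negbTE h1) (negbTE hg') (negbTE hh').
have [y] := exB _ _ B1 B2 h hD.
rewrite !inE !negb_or => /andP [/andP [/andP [y1 yg] yh]].
rewrite (negbTE y1) /= set3D1_set1 // => y_in By.
by exists y => //; rewrite yg.
Qed.

Theorem mainTheorem8 (gT : finGroupType) (B : {set {set gT}})
  (g h g' h' : gT) :
  is_rank3_matroid_bases B -> left_invariant B ->
  g != 1 -> h != 1 -> g != h ->
  g' != 1 -> h' != 1 -> g' != h' ->
  forb g h :|: forb g' h' \subset B ->
  (g' != g /\ forb g g' \subset B) \/ (h' != g /\ forb g h' \subset B).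
Proof.
move=> [matB _] invB _ h1 gh _ _ _; rewrite subUset => /andP [].
move=> /(forb_subsetP invB) B1 /(forb_subsetP invB) B2.
have [<-|hg'] := eqVneq h g'; first by left; rewrite eq_sym gh; split=> //; apply/forb_subsetP.
have [<-|hh'] := eqVneq h h'; first by right; rewrite eq_sym gh; split=> //; apply/forb_subsetP.
have hg : h != g by rewrite eq_sym.
have [y /orP [] /eqP -> /andP [yg By]] :=
  basis_exchange_triangle matB B1 B2 h1 hg hg' hh'.
- by left; split=> //; apply/forb_subsetP.
- by right; split=> //; apply/forb_subsetP.
Qed.
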